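(* Let $N\ge 1$ be an integer and let $P=p_1p_2\cdots p_k$ be a product of $k\ge1$ primes. For $1\le n\le N$ let $\widetilde w_n\in\{0,1,\dots,P-1\}$ be the remainder of $w_n$ upon division by $P$. If $N\,\widetilde w_n<P$ for each $1\le n\le N$, then $\widetilde w_n=w_n$ for each $1\le n\le N$.
   Context: The stack-sorting map $s$ is defined recursively: $s$ sends the empty permutation to itself, and if $\pi$ is nonempty with largest entry $m$, written $\pi=LmR$, then $s(\pi)=s(L)\,s(R)\,m$. A permutation $\pi$ is $3$-stack-sortable if $s(s(s(\pi)))$ is increasing. $w_n$ denotes the number of $3$-stack-sortable permutations of $\{1,\dots,n\}$. *)

From mathcomp Require Import all_boot.
Set Implicit Arguments. Unset Strict Implicit. Unset Printing Implicit Defensive.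

(* Stack-sorting map on sequences of distinct naturals:
   s([]) = [], s(L m R) = s(L) s(R) m with m the largest entry.
   Implemented with fuel; fuel = size s suffices since L and R are shorter. *)
Fixpoint stack_sort_aux (fuel : nat) (s : seq nat) : seq nat :=
  match fuel with
  | 0 => s
  | f.+1 =>
      if s is [::] then [::] else
      let m := foldr maxn 0 s in
      let i := index m s in
      stack_sort_aux f (take i s) ++ stack_sort_aux f (drop i.+1 s) ++ [:: m]
  end.

Definition stack_sort (s : seq nat) : seq nat := stack_sort_aux (size s) s.

Definition three_stack_sortable (s : seq nat) : bool :=
  sorted ltn (stack_sort (stack_sort (stack_sort s))).

(* w_n : number of 3-stack-sortable permutations of {1,...,n}
   (permutations returns a duplicate-free list of all permutations) *)
Definition w (n : nat) : nat :=
  count three_stack_sortable (permutations (iota 1 n)).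

From mathcomp Require Import all_boot zify.

(* Stack-sorting commutes with deleting all entries below a threshold and with
   order-preserving relabellings.  Hence deleting the entry 1 from a
   3-stack-sortable permutation of length k+1 and standardizing leaves a
   3-stack-sortable permutation of length k, from which the original is
   recovered by knowing the position of 1: w_(k+1) <= (k+1) w_k.  So if
   w_n < P then w_(n+1) <= N (w_n mod P) < P, and by induction w_n < P,
   i.e. w_n mod P = w_n, for all n <= N. *)

Set Implicit Arguments.
Unset Strict Implicit.
Unset Printing Implicit Defensive.

Lemma foldr_maxn_leq s b : (foldr maxn 0 s <= b) = all (leq^~ b) s.
Proof. by elim: s => //= x s IH; rewrite geq_max IH. Qed.

Lemma leq_foldr_maxn s y : y \in s -> y <= foldr maxn 0 s.
Proof. by move: y; apply/allP; rewrite -foldr_maxn_leq. Qed.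

Lemma foldr_maxn_mem x s : foldr maxn 0 (x :: s) \in x :: s.
Proof.
elim: s x => [|y s IH] x /=; first by rewrite maxn0 mem_head.
case: (leqP x (maxn y (foldr maxn 0 s))) => _; last exact: mem_head.
by rewrite inE (IH y) orbT.
Qed.

Lemma split_index (T : eqType) (x : T) s :
  x \in s -> s = take (index x s) s ++ x :: drop (index x s).+1 s.
Proof. by move=> xs; rewrite -drop_index // cat_take_drop. Qed.

Lemma insert_rem_index (T : eqType) (x : T) s : x \in s ->
  s = take (index x s) (rem x s) ++ x :: drop (index x s) (rem x s).
Proof.
move=> xs; have size_take_index : size (take (index x s) s) = index x s.
  by rewrite size_takel // index_size.
by rewrite remE -{1}size_take_index take_size_cat // drop_size_cat // -split_index.
Qed.

Lemma split_max x s :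
  exists A m B, [/\ x :: s = A ++ m :: B, m \notin A & all (leq^~ m) (A ++ B)].
Proof.
set m := foldr maxn 0 (x :: s).
have mt : m \in x :: s := foldr_maxn_mem x s.
have := leqnn m; rewrite {1}foldr_maxn_leq {1}(split_index mt) all_cat /=.
case/and3P=> mA _ mB.
exists (take (index m (x :: s)) (x :: s)), m, (drop (index m (x :: s)).+1 (x :: s)).
by rewrite in_take // ltnn all_cat mA mB -split_index.
Qed.

Lemma stack_sort_auxS n s : s != [::] ->
  stack_sort_aux n.+1 s =
  stack_sort_aux n (take (index (foldr maxn 0 s) s) s) ++
  stack_sort_aux n (drop (index (foldr maxn 0 s) s).+1 s) ++ [:: foldr maxn 0 s].
Proof. by case: s. Qed.

Lemma stack_sort_aux_pivot n (A B : seq nat) (m : nat) :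
  m \notin A -> all (leq^~ m) (A ++ B) ->
  stack_sort_aux n.+1 (A ++ m :: B) = stack_sort_aux n A ++ stack_sort_aux n B ++ [:: m].
Proof.
move=> mA Am; have max_m : foldr maxn 0 (A ++ m :: B) = m.
  apply/eqP; rewrite eqn_leq foldr_maxn_leq all_cat /= leqnn -all_cat Am.
  by rewrite leq_foldr_maxn // mem_cat mem_head orbT.
rewrite stack_sort_auxS; last by case: A {mA Am max_m}.
have dropB : drop (size A).+1 (A ++ m :: B) = B.
  by rewrite -cat_rcons -(size_rcons A m) drop_size_cat.
by rewrite max_m take_pivot // index_pivot // dropB.
Qed.

Lemma perm_stack_sort_aux n s : perm_eq (stack_sort_aux n s) s.
Proof.
elim: n s => [|n IH] [|x s] //.
have [A [m [B [-> mA Am]]]] := split_max x s.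
rewrite stack_sort_aux_pivot //.
by apply: perm_cat; rewrite ?cats1 ?perm_rcons ?perm_cons IH.
Qed.

Lemma stack_sort_aux_fuel n n' s : size s <= n -> size s <= n' ->
  stack_sort_aux n s = stack_sort_aux n' s.
Proof.
elim: n n' s => [|n IH] [|n'] [|x s] // Hn Hn'.
have [A [m [B [E mA Am]]]] := split_max x s.
rewrite E !stack_sort_aux_pivot //; rewrite E size_cat /= in Hn Hn'.
by congr (_ ++ _ ++ _); apply: IH; lia.
Qed.

Lemma stack_sort_aux_map f n s : {mono f : x y / x <= y} ->
  stack_sort_aux n (map f s) = map f (stack_sort_aux n s).
Proof.
move=> f_mono; elim: n s => [|n IH] [|x s] //.
have [A [m [B [-> mA Am]]]] := split_max x s.
rewrite map_cat !stack_sort_aux_pivot //; first by rewrite !IH !map_cat.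
- by rewrite (mem_map (incn_inj f_mono)).
- by rewrite -map_cat all_map (@eq_all _ _ (leq^~ m)) // => y /=; rewrite f_mono.
Qed.

Lemma stack_sort_aux_filter k n s :
  stack_sort_aux n (filter (leq k) s) = filter (leq k) (stack_sort_aux n s).
Proof.
elim: n s => [|n IH] [|x s] //.
have [A [m [B [-> mA Am]]]] := split_max x s.
have [km | mk] := leqP k m.
  rewrite filter_cat [filter _ (_ :: _)]/= km !stack_sort_aux_pivot //.
  - by rewrite !filter_cat /= km !IH.
  - by rewrite mem_filter (negbTE mA) andbF.
  - by rewrite -filter_cat; apply/allP => y; rewrite mem_filter => /andP[_ /(allP Am)].
have filter_below u : all (leq^~ m) u -> filter (leq k) u = [::].
  move=> /allP um; rewrite -(filter_pred0 u); apply: eq_in_filter => y /um ym.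
  by apply/negbTE; rewrite -ltnNge (leq_ltn_trans ym mk).
have Am' : all (leq^~ m) (A ++ m :: B) by move: Am; rewrite !all_cat /= leqnn.
by rewrite !filter_below // (perm_all _ (perm_stack_sort_aux _ _)).
Qed.

Lemma stack_sort_map f s : {mono f : x y / x <= y} ->
  stack_sort (map f s) = map f (stack_sort s).
Proof. by move=> f_mono; rewrite /stack_sort size_map stack_sort_aux_map. Qed.

Lemma stack_sort_filter k s :
  stack_sort (filter (leq k) s) = filter (leq k) (stack_sort s).
Proof.
rewrite /stack_sort -stack_sort_aux_filter.
by apply: stack_sort_aux_fuel; rewrite // size_filter count_size.
Qed.

Lemma three_stack_sortable_map f s : {mono f : x y / x <= y} ->
  three_stack_sortable (map f s) = three_stack_sortable s.
Proof.
move=> f_mono; rewrite /three_stack_sortable !stack_sort_map //.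
by apply: mono_sorted => x y /=; rewrite !ltnNge f_mono.
Qed.

Lemma three_stack_sortable_filter k s :
  three_stack_sortable s -> three_stack_sortable (filter (leq k) s).
Proof.
rewrite /three_stack_sortable !stack_sort_filter.
by apply: sorted_filter; exact: ltn_trans.
Qed.

Definition insert_min (sigma : seq nat) (i : nat) : seq nat :=
  take i (map succn sigma) ++ 1 :: drop i (map succn sigma).

Definition delete_min (pi : seq nat) : seq nat := map predn (filter (leq 2) pi).

Lemma map_succn_delete_min (pi : seq nat) : map succn (delete_min pi) = filter (leq 2) pi.
Proof.
rewrite -map_comp map_id_in // => y; rewrite mem_filter => /andP[y_gt1 _].
exact: prednK (ltnW y_gt1).
Qed.

Lemma insert_delete_min (pi : seq nat) : uniq pi -> 1 \in pi -> all (leq 1) pi ->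
  insert_min (delete_min pi) (index 1 pi) = pi.
Proof.
move=> pi_uniq pi1 pi_pos; rewrite /insert_min map_succn_delete_min.
have -> : filter (leq 2) pi = rem 1 pi.
  rewrite rem_filter //; apply: eq_in_filter => y /(allP pi_pos) y_pos.
  by rewrite ltn_neqAle y_pos andbT eq_sym.
by rewrite -insert_rem_index.
Qed.

Lemma perm_delete_min k (pi : seq nat) :
  perm_eq pi (iota 1 k.+1) -> perm_eq (delete_min pi) (iota 1 k).
Proof.
move=> pi_perm; apply: (perm_map_inj succn_inj); rewrite map_succn_delete_min.
have -> : map succn (iota 1 k) = filter (leq 2) (iota 1 k.+1).
  rewrite [RHS]/= [in RHS](iotaDl 1 1).
  rewrite (all_filterP _) // all_map; apply/allP => z.
  by rewrite mem_iota => /andP[].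
exact: perm_filter.
Qed.

Lemma three_stack_sortable_delete_min (pi : seq nat) :
  three_stack_sortable pi -> three_stack_sortable (delete_min pi).
Proof.
move=> /(three_stack_sortable_filter 2); rewrite -map_succn_delete_min.
by rewrite three_stack_sortable_map.
Qed.

Lemma w0 : w 0 = 1.
Proof. by []. Qed.

Lemma w_succ_le k : w k.+1 <= k.+1 * w k.
Proof.
rewrite /w -!size_filter.
set S := filter three_stack_sortable (permutations (iota 1 k)).
have -> : k.+1 * size S = size [seq insert_min sigma i | sigma <- S, i <- iota 0 k.+1].
  by rewrite size_allpairs size_iota mulnC.
apply: uniq_leq_size; first by rewrite filter_uniq // permutations_uniq.
move=> pi; rewrite mem_filter mem_permutations => /andP[pi_ss pi_perm].
have pi_uniq : uniq pi by rewrite (perm_uniq pi_perm) iota_uniq.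
have pi1 : 1 \in pi by rewrite (perm_mem pi_perm) mem_iota.
have pi_pos : all (leq 1) pi.
  by rewrite (perm_all _ pi_perm); apply/allP => y; rewrite mem_iota => /andP[].
apply/allpairsP; exists (delete_min pi, index 1 pi); split.
- by rewrite mem_filter three_stack_sortable_delete_min // mem_permutations perm_delete_min.
- by rewrite mem_iota add0n -(size_iota 1 k.+1) -(perm_size pi_perm) index_mem.
- by rewrite insert_delete_min.
Qed.

Lemma prod_primes_gt1 ps : 0 < size ps -> all prime ps -> 1 < \prod_(p <- ps) p.
Proof.
case: ps => // p ps _ /andP[p_prime ps_prime]; rewrite big_cons.
apply: leq_trans (prime_gt1 p_prime) (leq_pmulr _ _).
by rewrite big_seq prodn_cond_gt0 // => q /(allP ps_prime)/prime_gt0.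
Qed.

Lemma w_lt_of_mod_bound N P : 1 < P ->
  (forall n, 1 <= n <= N -> N * (w n %% P) < P) -> forall n, n <= N -> w n < P.
Proof.
move=> P_gt1 bound; elim=> [|n IH] n_le; first by rewrite w0.
apply: leq_ltn_trans (w_succ_le n) _.
case: n IH n_le => [|n] IH n_le; first by rewrite mul1n w0.
have := bound n.+1; rewrite (ltnW n_le) modn_small ?IH ?(ltnW n_le) // => /(_ isT).
by apply: leq_ltn_trans; rewrite leq_mul2r n_le orbT.
Qed.

Theorem proposition3p1 (N : nat) (ps : seq nat) (P : nat) :
  1 <= N -> 0 < size ps -> all prime ps -> P = \prod_(p <- ps) p ->
  (forall n, 1 <= n <= N -> N * (w n %% P) < P) ->
  forall n, 1 <= n <= N -> w n %% P = w n.
Proof.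
move=> _ ps_ne ps_prime -> bound n /andP[_ n_le].
by rewrite modn_small // (w_lt_of_mod_bound (prod_primes_gt1 ps_ne ps_prime) bound).
Qed.
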